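(* Fix integers $T,C,K\ge 1$, lengths $T_2,\dots,T_K\ge 1$, and the following data. (a) A linear map $W_\theta:\mathbb{R}^{T\times C}\to\mathbb{R}^{N}$ (a short-time Fourier transform) with constants $0<A\le B<\infty$ such that $\sqrt{A}\|\bm Y\|_2\le\|W_\theta(\bm Y)\|_2\le\sqrt{B}\|\bm Y\|_2$ for all $\bm Y\in\mathbb{R}^{T\times C}$. (b) For each $k=2,\dots,K$ a fixed linear upsampling operator $\operatorname{Up}_T:\mathbb{R}^{T_k}\to\mathbb{R}^{T}$. (c) A moving-average smoother $\mathrm{MA}_\kappa:\mathbb{R}^T\to\mathbb{R}^T$ of the form $(\mathrm{MA}_\kappa u)(t)=\sum_{s\in\mathcal W_t} w_{t,s}u(s)$, where $\mathcal W_t\subseteq\{1,\dots,T\}$ is the averaging window of $t$ and the weights satisfy $w_{t,s}\ge 0$, $\sum_{s\in\mathcal W_t}w_{t,s}=1$; assume moreover there is $\rho_\kappa\ge 1$ with $\langle(\mathrm{MA}_\kappa u)(t)\rangle_t\le\rho_\kappa\langle u(t)\rangle_t$ for every nonnegative sequence $u$. (d) Nonnegative score weights $\alpha_f,\alpha_t,\alpha_g,\alpha_c,\alpha_{\mathrm{cyc}},\alpha_{\mathrm{ms}}$ and positive loss weights $\omega_2,\dots,\omega_K,\omega_{\mathrm{full}}$ with $\sum_{k=2}^K\omega_k+\omega_{\mathrm{full}}=1$. For arrays $\bm X,\hat{\bm X},\hat{\bm X}_{\leftarrow f},\hat{\bm X}_{\mathrm{ms}}\in\mathbb{R}^{T\times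 C}$, arrays $\bm X^{(k)},\hat{\bm X}^{(k)}_{\mathrm{ms}}\in\mathbb{R}^{T_k\times C}$ ($k=2,\dots,K$) and a real sequence $g(t)$, $t=1,\dots,T$, put $\bm S=W_\theta(\bm X)$, $\hat{\bm S}_{\rightarrow f}=W_\theta(\hat{\bm X})$, $c(t)=|\hat{\bm X}_{\mathrm{ms}}(t)-\hat{\bm X}_{\leftarrow f}(t)|$ and \[ \mathcal{L}_{\mathrm{ms}}=\sum_{k=2}^K\omega_k\,l(\hat{\bm X}^{(k)}_{\mathrm{ms}},\bm X^{(k)})+\omega_{\mathrm{full}}\,l(\hat{\bm X}_{\mathrm{ms}},\bm X),\quad \mathcal{L}_{\mathrm{cyc}}=l(\hat{\bm S}_{\rightarrow f},\bm S)+l(\hat{\bm X}_{\leftarrow f},\bm X),\quad \mathcal{L}_{\mathrm{cons}}=l(\hat{\bm X}_{\mathrm{ms}},\hat{\bm X}_{\leftarrow f}), \] \[ \tilde{\mathcal A}_{\mathrm{cyc}}(t)=\alpha_f|\hat{\bm X}_{\leftarrow f}(t)-\bm X(t)|+\alpha_t|\hat{\bm X}(t)-\bm X(t)|+\alpha_g|g(t)|+\alpha_c c(t),\qquad \mathcal A_{\mathrm{cyc}}=\mathrm{MA}_\kappa(\tilde{\mathcal A}_{\mathrm{cyc}}), \] \[ \mathcal A_{\mathrm{ms}}(t)=|\hat{\bm X}_{\mathrm{ms}}(t)-\bm X(t)|+\sum_{k=2}^K\operatorname{Up}_T\big(|\hat{\bm X}^{(k)}_{\mathrm{ms}}-\bm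 X^{(k)}|\big)(t),\qquad \mathcal A(t)=\alpha_{\mathrm{cyc}}\mathcal A_{\mathrm{cyc}}(t)+\alpha_{\mathrm{ms}}\mathcal A_{\mathrm{ms}}(t). \] Then: (1) There exist constants $\kappa_{\mathrm{ms}},\kappa_{\mathrm{cyc}},\kappa_{\mathrm{cons}},\kappa_g,\kappa_0\ge 0$, not depending on the arrays $\bm X,\hat{\bm X},\hat{\bm X}_{\leftarrow f},\hat{\bm X}_{\mathrm{ms}},\bm X^{(k)},\hat{\bm X}^{(k)}_{\mathrm{ms}}$ or on $g$ (only on the fixed weights, dimensions and scales, operators, and $\rho_\kappa$), such that whenever $\mathcal L_{\mathrm{ms}}\le\varepsilon_{\mathrm{ms}}$, $\mathcal L_{\mathrm{cyc}}\le\varepsilon_{\mathrm{cyc}}$ and $\mathcal L_{\mathrm{cons}}\le\varepsilon_{\mathrm{cons}}$, \[ \langle\mathcal A(t)\rangle_t\le\kappa_{\mathrm{ms}}\varepsilon_{\mathrm{ms}}+\rho_\kappa\kappa_{\mathrm{cyc}}\varepsilon_{\mathrm{cyc}}+\rho_\kappa\kappa_{\mathrm{cons}}\varepsilon_{\mathrm{cons}}+\rho_\kappa\kappa_g\alpha_g\langle|g(t)|\rangle_t+\kappa_0 . \] (2) Let $\Omega\subseteq\{1,\dots,T\}$ be nonempty. If $\langle|\hat{\bm X}(t)-\bm X(t)|\rangle_{t\in\Omega}\ge\delta_t$, $\langle|\hat{\bm X}_{\leftarrow f}(t)-\bm X(t)|\rangle_{t\in\Omega}\ge\delta_f$ and $\langle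 c(t)\rangle_{t\in\Omega}\ge\delta_c$, then $\langle\tilde{\mathcal A}_{\mathrm{cyc}}(t)\rangle_{t\in\Omega}\ge\alpha_t\delta_t+\alpha_f\delta_f+\alpha_c\delta_c$. (3) If moreover $|\hat{\bm X}(t)-\bm X(t)|\ge\delta_t$, $|\hat{\bm X}_{\leftarrow f}(t)-\bm X(t)|\ge\delta_f$ and $c(t)\ge\delta_c$ for all $t\in\Omega$, then for every $t\in\Omega$ with $\mathcal W_t\subseteq\Omega$ one has $\mathcal A_{\mathrm{cyc}}(t)\ge\alpha_t\delta_t+\alpha_f\delta_f+\alpha_c\delta_c$. (4) If $\bm p_t(t),\tilde{\bm p}_f(t)$ ($t\in\Omega$) are probability vectors on a common finite set with $\|\bm p_t(t)-\tilde{\bm p}_f(t)\|_1\ge\delta_p$ for all $t\in\Omega$, then $d(t)=\mathrm{JS}(\bm p_t(t),\tilde{\bm p}_f(t))$ satisfies $\langle d(t)\rangle_{t\in\Omega}\ge\frac18\delta_p^2$.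
   Context: $\|\cdot\|_2$ is the Euclidean (Frobenius) norm of an array. For an array $\bm Y$ with rows indexed by time, $|\bm Y(t)|$ denotes the sum of absolute values of the entries in row $t$ (a nonnegative scalar per timestamp); $|\hat{\bm X}^{(k)}_{\mathrm{ms}}-\bm X^{(k)}|$ is the resulting length-$T_k$ sequence. $\langle u(t)\rangle_t=\frac1T\sum_{t=1}^T u(t)$ and $\langle u(t)\rangle_{t\in\Omega}=\frac1{|\Omega|}\sum_{t\in\Omega}u(t)$. The loss $l(\hat{\bm Y},\bm Y)$ is the mean over all entries of the SmoothL1 (Huber) function $\psi(r)=\tfrac12 r^2$ if $|r|<1$ and $\psi(r)=|r|-\tfrac12$ otherwise, applied to the entrywise difference $r=\hat Y-Y$. $\mathrm{JS}(p,q)=\tfrac12\mathrm{KL}(p\|m)+\tfrac12\mathrm{KL}(q\|m)$ with $m=\tfrac12(p+q)$ is the Jensen–Shannon divergence (natural logarithm). In the paper $\hat{\bm X}$ is the time-domain decoder output, $\hat{\bm X}_{\leftarrow f}$ the inverse-STFT of the predicted spectrum, $\hat{\bm X}_{\mathrm{ms}}$ the multi-scale reconstruction, $\bm X^{(k)}$ the band-limited downsampled scales, and $g(t)$ an uncertainty gate; the lemma holds for arbitrary such arrays. *)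

From HB Require Import structures.
From mathcomp Require Import all_boot all_order all_algebra.
From mathcomp Require Import reals exp.
Set Implicit Arguments. Unset Strict Implicit. Unset Printing Implicit Defensive.
Import Order.TTheory GRing.Theory Num.Theory.
Local Open Scope ring_scope.

Section Defs.
Variable R : realType.

Definition frob m n (Y : 'M[R]_(m, n)) : R :=
  Num.sqrt (\sum_(i < m) \sum_(j < n) Y i j ^+ 2).

Definition huber (r : R) : R :=
  if `|r| < 1 then r ^+ 2 / 2 else `|r| - 1 / 2.

Definition loss m n (Yh Y : 'M[R]_(m, n)) : R :=
  (\sum_(i < m) \sum_(j < n) huber (Yh i j - Y i j)) / (m * n)%:R.

(* |Y(t)| : sum of absolute values of the entries of row t *)
Definition rowabs m n (Y : 'M[R]_(m, n)) (t : 'I_m) : R :=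
  \sum_(j < n) `|Y t j|.

Definition rowabs_vec m n (Y : 'M[R]_(m, n)) : 'rV[R]_m :=
  \row_(t < m) rowabs Y t.

Definition tmean T (u : 'I_T -> R) : R := (\sum_(t < T) u t) / T%:R.

Definition tmean_on T (Om : {set 'I_T}) (u : 'I_T -> R) : R :=
  (\sum_(t in Om) u t) / #|Om|%:R.

Definition MA T (Wn : 'I_T -> {set 'I_T}) (w : 'I_T -> 'I_T -> R)
  (u : 'I_T -> R) (t : 'I_T) : R :=
  \sum_(s in Wn t) w t s * u s.

Definition is_prob (S : finType) (p : S -> R) : Prop :=
  (forall x, 0 <= p x) /\ \sum_x p x = 1.

Definition l1dist (S : finType) (p q : S -> R) : R := \sum_x `|p x - q x|.

(* KL divergence, natural log, convention 0 ln(0/.) = 0 *)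
Definition KL (S : finType) (p q : S -> R) : R :=
  \sum_x (if p x == 0 then 0 else p x * ln (p x / q x)).

Definition JS (S : finType) (p q : S -> R) : R :=
  let m := fun x => (p x + q x) / 2 in
  KL p m / 2 + KL q m / 2.

End Defs.

(* Every residual row sum is controlled by a Huber loss, since |r| <= huber r + 1/2,
   so each time average entering the score is bounded by an affine function of the
   losses: the spectral residual is pulled back to the time domain by the lower frame
   bound, an upsampled residual costs the entrywise l1 norm of the upsampling matrix,
   and the smoother costs the factor rho.  The lower bounds (2) and (3) follow from
   linearity of averages and from the smoother being a convex combination over its
   window.  For (4), write p, q = m (1 + a), m (1 - a) around their midpoint m; then
   (1 + a) ln (1 + a) + (1 - a) ln (1 - a) >= a^2 gives JS(p, q) >= sum m a^2 / 2, and
   x^2 / 2 >= mu x - mu^2 / 2 with mu = ||p - q||_1 / 2 turns this into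
   JS(p, q) >= ||p - q||_1^2 / 8. *)

From HB Require Import structures.
From mathcomp Require Import all_boot all_order all_algebra.
From mathcomp Require Import ring lra.
From mathcomp Require Import reals exp derive realfun.
From mathcomp Require normed_module.
Import normed_module.numFieldNormedType.Exports.
Set Implicit Arguments. Unset Strict Implicit. Unset Printing Implicit Defensive.
Import Order.TTheory GRing.Theory Num.Theory.
Local Open Scope ring_scope.

Section time_averages.
Variables (R : realType) (T : nat).
Implicit Types (Om : {set 'I_T}) (u v : 'I_T -> R).

Lemma tmeanE u : tmean u = tmean_on [set: 'I_T] u.
Proof.
by rewrite /tmean_on cardsT card_ord (eq_bigl predT) // => t; rewrite inE.
Qed.

Lemma tmean_onD Om u v :
  tmean_on Om (fun t => u t + v t) = tmean_on Om u + tmean_on Om v.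
Proof. by rewrite /tmean_on big_split mulrDl. Qed.

Lemma tmean_onZ Om (a : R) u : tmean_on Om (fun t => a * u t) = a * tmean_on Om u.
Proof. by rewrite /tmean_on -mulr_sumr mulrA. Qed.

Lemma tmean_on_sum Om (I : finType) (F : I -> 'I_T -> R) :
  tmean_on Om (fun t => \sum_i F i t) = \sum_i tmean_on Om (F i).
Proof. by rewrite /tmean_on exchange_big mulr_suml. Qed.

Lemma tmean_on_ge0 Om u : (forall t, 0 <= u t) -> 0 <= tmean_on Om u.
Proof. by move=> u_ge0; rewrite divr_ge0 ?sumr_ge0. Qed.

Lemma tmean_on_ge Om u (c : R) :
  Om != set0 -> (forall t, t \in Om -> c <= u t) -> c <= tmean_on Om u.
Proof.
move=> Om_neq0 c_le_u; have Om_gt0 : (0 : R) < #|Om|%:R by rewrite ltr0n card_gt0.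
by rewrite ler_pdivlMr // mulr_natr -sumr_const; exact: ler_sum.
Qed.

Lemma tmean_on_le Om u (c : R) :
  Om != set0 -> (forall t, t \in Om -> u t <= c) -> tmean_on Om u <= c.
Proof.
move=> Om_neq0 u_le_c; have Om_gt0 : (0 : R) < #|Om|%:R by rewrite ltr0n card_gt0.
by rewrite ler_pdivrMr // mulr_natr -sumr_const; exact: ler_sum.
Qed.

Lemma tmeanD u v : tmean (fun t => u t + v t) = tmean u + tmean v.
Proof. by rewrite !tmeanE tmean_onD. Qed.

Lemma tmeanZ (a : R) u : tmean (fun t => a * u t) = a * tmean u.
Proof. by rewrite !tmeanE tmean_onZ. Qed.

Lemma tmean_sum (I : finType) (F : I -> 'I_T -> R) :
  tmean (fun t => \sum_i F i t) = \sum_i tmean (F i).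
Proof. by rewrite tmeanE tmean_on_sum; apply: eq_bigr => i _; rewrite tmeanE. Qed.

Lemma tmean_le_cst u (c : R) : (0 < T)%N -> (forall t, u t <= c) -> tmean u <= c.
Proof.
move=> T_gt0 u_le_c; rewrite tmeanE tmean_on_le //.
by apply/set0Pn; exists (Ordinal T_gt0); rewrite inE.
Qed.

End time_averages.

Section entrywise_l1.
Variable R : realType.

Definition l1mx m n (Y : 'M[R]_(m, n)) : R := \sum_i \sum_j `|Y i j|.

Lemma rowabs_ge0 m n (Y : 'M[R]_(m, n)) t : 0 <= rowabs Y t.
Proof. exact: sumr_ge0. Qed.

Lemma l1mx_ge0 m n (Y : 'M[R]_(m, n)) : 0 <= l1mx Y.
Proof. by rewrite sumr_ge0 // => i _; rewrite sumr_ge0. Qed.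

Lemma ler_dsum_term m n (F : 'I_m -> 'I_n -> R) i j :
  (forall i j, 0 <= F i j) -> F i j <= \sum_i \sum_j F i j.
Proof.
by move=> F_ge0; rewrite pair_bigA (bigD1 (i, j)) //= lerDl sumr_ge0.
Qed.

Lemma normr_le_l1mx m n (Y : 'M[R]_(m, n)) i j : `|Y i j| <= l1mx Y.
Proof. exact: ler_dsum_term. Qed.

Lemma normr_le_frob m n (Y : 'M[R]_(m, n)) i j : `|Y i j| <= frob Y.
Proof.
rewrite /frob -sqrtr_sqr; apply: ler_wsqrtr.
by apply: (@ler_dsum_term _ _ (fun i j => Y i j ^+ 2) i j) => ? ?; exact: sqr_ge0.
Qed.

Lemma frob_le_l1mx m n (Y : 'M[R]_(m, n)) : frob Y <= l1mx Y.
Proof.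
rewrite /frob -(ger0_norm (l1mx_ge0 Y)) -sqrtr_sqr.
apply: ler_wsqrtr.
rewrite expr2 {2}/l1mx mulr_sumr; apply: ler_sum => i _.
rewrite mulr_sumr; apply: ler_sum => j _.
by rewrite -real_normK ?num_real // expr2 ler_wpM2r // normr_le_l1mx.
Qed.

Lemma l1mx_le_frob m n (Y : 'M[R]_(m, n)) : l1mx Y <= (m * n)%:R * frob Y.
Proof.
apply: le_trans (_ : \sum_(i < m) \sum_(j < n) frob Y <= _).
  by apply: ler_sum => i _; apply: ler_sum => j _; exact: normr_le_frob.
by rewrite pair_bigA sumr_const card_prod !card_ord mulr_natl.
Qed.

Lemma row_mulmx_le_l1mx n p (v : 'rV[R]_n) (M : 'M[R]_(n, p)) t :
  (v *m M) ord0 t <= l1mx v * l1mx M.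
Proof.
rewrite mxE {1}/l1mx big_ord1 mulr_suml; apply: ler_sum => s _.
by rewrite (le_trans (ler_norm _)) // normrM ler_wpM2l // normr_le_l1mx.
Qed.

Lemma l1mx_rowabs_vec m n (Y : 'M[R]_(m, n)) : l1mx (rowabs_vec Y) = l1mx Y.
Proof.
rewrite /l1mx big_ord1; apply: eq_bigr => t _.
by rewrite mxE ger0_norm // sumr_ge0.
Qed.

End entrywise_l1.

Section huber_loss.
Variable R : realType.

Lemma huber_ge0 (r : R) : 0 <= huber r.
Proof. by rewrite /huber; case: ltrP => [_|r_ge1]; [rewrite divr_ge0 ?sqr_ge0 | lra]. Qed.

Lemma normr_le_huber (r : R) : `|r| <= huber r + 1 / 2.
Proof.
rewrite /huber; case: ltrP => [r_lt1|_]; last by rewrite subrK.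
by rewrite -real_normK ?num_real //; have := normr_ge0 r; nra.
Qed.

Lemma loss_ge0 m n (Yh Y : 'M[R]_(m, n)) : 0 <= loss Yh Y.
Proof.
by rewrite divr_ge0 // sumr_ge0 // => i _; rewrite sumr_ge0 // => j _; exact: huber_ge0.
Qed.

(* When m * n = 0 the loss is 0 / 0 = 0 and both sides vanish. *)
Lemma mulr_loss m n (Yh Y : 'M[R]_(m, n)) :
  (m * n)%:R * loss Yh Y = \sum_i \sum_j huber (Yh i j - Y i j).
Proof.
have [mn0|mn_neq0] := eqVneq (m * n)%N 0%N; last by rewrite mulrC divfK ?pnatr_eq0.
rewrite mn0 mul0r pair_bigA big1 // => -[i j] _.
by move: (leq_mul (ltn_ord i) (ltn_ord j)); rewrite mn0 leqn0 muln_eq0.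
Qed.

Lemma l1mx_le_loss m n (Yh Y : 'M[R]_(m, n)) :
  l1mx (Yh - Y) <= (m * n)%:R * (loss Yh Y + 1 / 2).
Proof.
rewrite mulrDr mulr_loss.
apply: le_trans (_ : \sum_i \sum_j (huber (Yh i j - Y i j) + 1 / 2) <= _).
  by apply: ler_sum => i _; apply: ler_sum => j _; rewrite !mxE normr_le_huber.
by rewrite !pair_bigA big_split /= sumr_const card_prod !card_ord mulr_natl.
Qed.

End huber_loss.

Section residual_bounds.
Variable R : realType.

Lemma l1mx_le_frame_loss m n N (W : {linear 'M[R]_(m, n) -> 'rV[R]_N}) (A : R) :
  0 < A -> (forall Y, Num.sqrt A * frob Y <= frob (W Y)) ->
  forall Yh Y,
  l1mx (Yh - Y) <= (m * n)%:R * (N%:R / Num.sqrt A * (loss (W Yh) (W Y) + 1 / 2)).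
Proof.
move=> A_gt0 W_lower Yh Y; have sqrtA_gt0 : 0 < Num.sqrt A by rewrite sqrtr_gt0.
apply: le_trans (l1mx_le_frob _) _; rewrite ler_wpM2l // mulrAC ler_pdivlMr // mulrC.
apply: le_trans (W_lower _) _; rewrite linearB.
by apply: le_trans (frob_le_l1mx _) _; rewrite -[N in N%:R]mul1n l1mx_le_loss.
Qed.

Lemma up_rowabs_vec_le n m T (U : {linear 'rV[R]_n -> 'rV[R]_T}) (Yh Y : 'M[R]_(n, m)) t :
  U (rowabs_vec (Yh - Y)) ord0 t
  <= l1mx (lin1_mx U) * ((n * m)%:R * (loss Yh Y + 1 / 2)).
Proof.
rewrite -mul_rV_lin1 mulrC; apply: le_trans (row_mulmx_le_l1mx _ _ _) _.
by rewrite l1mx_rowabs_vec ler_wpM2r ?l1mx_ge0 // l1mx_le_loss.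
Qed.

Lemma tmean_rowabs_le T C (Y : 'M[R]_(T, C)) (x : R) : (0 < T)%N ->
  l1mx Y <= (T * C)%:R * x -> tmean (rowabs Y) <= C%:R * x.
Proof. by move=> T_gt0; rewrite /tmean ler_pdivrMr ?ltr0n // mulrAC -natrM mulnC. Qed.


End residual_bounds.

Section mean_score_bound.
Variables (R : realType) (T C N : nat) (I : finType) (Tk : I -> nat).
Hypothesis T_gt0 : (0 < T)%N.
Variables (W : {linear 'M[R]_(T, C) -> 'rV[R]_N}) (A : R).
Hypothesis A_gt0 : 0 < A.
Hypothesis W_lower : forall Y, Num.sqrt A * frob Y <= frob (W Y).
Variable Up : forall k : I, {linear 'rV[R]_(Tk k) -> 'rV[R]_T}.
Variables (smooth : ('I_T -> R) -> 'I_T -> R) (rho : R).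
Hypothesis rho_ge0 : 0 <= rho.
Hypothesis smooth_mean : forall u, (forall t, 0 <= u t) -> tmean (smooth u) <= rho * tmean u.
Variables (af at_ ag ac acyc ams : R) (om : I -> R) (omfull : R).
Hypotheses (af_ge0 : 0 <= af) (at_ge0 : 0 <= at_) (ag_ge0 : 0 <= ag) (ac_ge0 : 0 <= ac).
Hypotheses (acyc_ge0 : 0 <= acyc) (ams_ge0 : 0 <= ams).
Hypotheses (om_gt0 : forall k, 0 < om k) (omfull_gt0 : 0 < omfull).

Let frame_gain : R := C%:R * (N%:R / Num.sqrt A).
Let up_gain k : R := l1mx (lin1_mx (Up k)) * (Tk k * C)%:R.

Lemma tmean_rowabs_le_loss (Yh Y : 'M[R]_(T, C)) (e : R) :
  loss Yh Y <= e -> tmean (rowabs (Yh - Y)) <= C%:R * (e + 1 / 2).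
Proof.
move=> loss_le; apply: tmean_rowabs_le => //.
by apply: le_trans (l1mx_le_loss _ _) _; rewrite ler_wpM2l // lerD2r.
Qed.

Lemma tmean_rowabs_le_frame_loss (Yh Y : 'M[R]_(T, C)) (e : R) :
  loss (W Yh) (W Y) <= e -> tmean (rowabs (Yh - Y)) <= frame_gain * (e + 1 / 2).
Proof.
move=> loss_le; rewrite /frame_gain -mulrA; apply: tmean_rowabs_le => //.
apply: le_trans (l1mx_le_frame_loss A_gt0 W_lower _ _) _.
by rewrite !ler_wpM2l ?divr_ge0 ?sqrtr_ge0 // lerD2r.
Qed.

Lemma tmean_cyc_score_le (X Xh Xf Xms : 'M[R]_(T, C)) (g : 'I_T -> R) (ecyc econs : R) :
  loss (W Xh) (W X) <= ecyc -> loss Xf X <= ecyc -> loss Xms Xf <= econs ->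
  tmean (fun t => af * rowabs (Xf - X) t + at_ * rowabs (Xh - X) t + ag * `|g t|
                  + ac * rowabs (Xms - Xf) t)
  <= (af * C%:R + at_ * frame_gain) * (ecyc + 1 / 2) + ac * C%:R * (econs + 1 / 2)
     + ag * tmean (fun t => `|g t|).
Proof.
move=> /tmean_rowabs_le_frame_loss mean_h /tmean_rowabs_le_loss mean_f
  /tmean_rowabs_le_loss mean_c.
rewrite !tmeanD !tmeanZ.
have := ler_wpM2l af_ge0 mean_f; have := ler_wpM2l at_ge0 mean_h.
have := ler_wpM2l ac_ge0 mean_c; lra.
Qed.

Lemma tmean_ms_score_le (X Xms : 'M[R]_(T, C)) (Xk Xkms : forall k, 'M[R]_(Tk k, C))
    (ems : R) :
  \sum_k om k * loss (Xkms k) (Xk k) + omfull * loss Xms X <= ems ->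
  tmean (fun t => rowabs (Xms - X) t + \sum_k Up k (rowabs_vec (Xkms k - Xk k)) ord0 t)
  <= (C%:R / omfull + \sum_k up_gain k / om k) * ems + (C%:R + \sum_k up_gain k) / 2.
Proof.
move=> Lms_le.
have loss_term_ge0 k : 0 <= om k * loss (Xkms k) (Xk k).
  by rewrite mulr_ge0 ?loss_ge0 ?ltW.
have loss_full_ge0 : 0 <= omfull * loss Xms X by rewrite mulr_ge0 ?loss_ge0 ?ltW.
have loss_full : loss Xms X <= ems / omfull.
  rewrite ler_pdivlMr // mulrC; apply: le_trans Lms_le; rewrite lerDr.
  exact: sumr_ge0.
have mean_up k : tmean (fun t => Up k (rowabs_vec (Xkms k - Xk k)) ord0 t)
    <= up_gain k * (ems / om k + 1 / 2).
  have loss_k : loss (Xkms k) (Xk k) <= ems / om k.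
    rewrite ler_pdivlMr // mulrC; apply: le_trans Lms_le.
    by rewrite (bigD1 k) //= -addrA lerDl addr_ge0 ?sumr_ge0.
  apply: tmean_le_cst => // t; apply: le_trans (up_rowabs_vec_le _ _ _ _) _.
  by rewrite /up_gain -mulrA ler_wpM2l ?l1mx_ge0 // ler_wpM2l // lerD2r.
rewrite tmeanD [X in _ + X <= _]tmean_sum.
apply: le_trans (lerD (tmean_rowabs_le_loss loss_full) (ler_sum _ (fun k _ => mean_up k))) _.
have -> : \sum_k up_gain k * (ems / om k + 1 / 2) =
    (\sum_k up_gain k / om k) * ems + (\sum_k up_gain k) / 2.
  by rewrite !mulr_suml -big_split; apply: eq_bigr => k _ /=; ring.
lra.
Qed.

(* The constants collect the affine bounds of tmean_cyc_score_le, scaled by rho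
   through the smoother, and of tmean_ms_score_le. *)
Lemma tmean_score_le : exists kms kcyc kcons kg k0 : R,
  [/\ 0 <= kms, 0 <= kcyc, 0 <= kcons, 0 <= kg & 0 <= k0] /\
  forall (X Xh Xf Xms : 'M[R]_(T, C)) (Xk Xkms : forall k, 'M[R]_(Tk k, C))
         (g : 'I_T -> R) (ems ecyc econs : R),
    \sum_k om k * loss (Xkms k) (Xk k) + omfull * loss Xms X <= ems ->
    loss (W Xh) (W X) + loss Xf X <= ecyc -> loss Xms Xf <= econs ->
    tmean (fun t =>
      acyc * smooth (fun t => af * rowabs (Xf - X) t + at_ * rowabs (Xh - X) t
                              + ag * `|g t| + ac * rowabs (Xms - Xf) t) t
      + ams * (rowabs (Xms - X) t + \sum_k Up k (rowabs_vec (Xkms k - Xk k)) ord0 t))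
    <= kms * ems + rho * kcyc * ecyc + rho * kcons * econs
       + rho * kg * ag * tmean (fun t => `|g t|) + k0.
Proof.
have frame_gain_ge0 : 0 <= frame_gain by rewrite /frame_gain mulr_ge0 ?divr_ge0 ?sqrtr_ge0.
have up_gain_ge0 k : 0 <= up_gain k by rewrite /up_gain mulr_ge0 ?l1mx_ge0.
have up_gain_sum_ge0 : 0 <= \sum_k up_gain k by exact: sumr_ge0.
have up_gain_om_sum_ge0 : 0 <= \sum_k up_gain k / om k.
  by apply: sumr_ge0 => k _; exact: divr_ge0 (up_gain_ge0 k) (ltW (om_gt0 k)).
have omfull_ge0 : 0 <= omfull := ltW omfull_gt0.
pose kcyc0 := af * C%:R + at_ * frame_gain; pose kcons0 := ac * C%:R.
exists (ams * (C%:R / omfull + \sum_k up_gain k / om k)), (acyc * kcyc0), (acyc * kcons0),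
  acyc,
  ((acyc * rho * (kcyc0 + kcons0) + ams * (C%:R + \sum_k up_gain k)) / 2).
split.
  by split; rewrite ?(frame_gain_ge0, up_gain_sum_ge0, up_gain_om_sum_ge0, mulr_ge0, addr_ge0,
    invr_ge0).
move=> X Xh Xf Xms Xk Xkms g ems ecyc econs Lms_le Lcyc_le Lcons_le.
have lossW : loss (W Xh) (W X) <= ecyc.
  by apply: le_trans Lcyc_le; rewrite lerDl loss_ge0.
have lossf : loss Xf X <= ecyc.
  by apply: le_trans Lcyc_le; rewrite lerDr loss_ge0.
have mean_cyc := tmean_cyc_score_le g lossW lossf Lcons_le.
have mean_ms := tmean_ms_score_le Lms_le.
have score_ge0 t : 0 <= af * rowabs (Xf - X) t + at_ * rowabs (Xh - X) t
                       + ag * `|g t| + ac * rowabs (Xms - Xf) t.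
  by rewrite ?(addr_ge0, mulr_ge0, rowabs_ge0).
have mean_smooth := le_trans (smooth_mean score_ge0) (ler_wpM2l rho_ge0 mean_cyc).
rewrite tmeanD !tmeanZ.
have := ler_wpM2l acyc_ge0 mean_smooth; have := ler_wpM2l ams_ge0 mean_ms.
rewrite /kcyc0 /kcons0; lra.
Qed.

End mean_score_bound.

Section lower_bounds.
Variable R : realType.

Lemma weighted_score_ge (af at_ ag ac x y z gabs df dt dc : R) :
  0 <= af -> 0 <= at_ -> 0 <= ag -> 0 <= ac -> 0 <= gabs ->
  df <= x -> dt <= y -> dc <= z ->
  at_ * dt + af * df + ac * dc <= af * x + at_ * y + ag * gabs + ac * z.
Proof.
move=> af_ge0 at_ge0 ag_ge0 ac_ge0 gabs_ge0 /(ler_wpM2l af_ge0) + /(ler_wpM2l at_ge0) +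
  /(ler_wpM2l ac_ge0).
have := mulr_ge0 ag_ge0 gabs_ge0; lra.
Qed.

Lemma MA_ge T (Wn : 'I_T -> {set 'I_T}) (w : 'I_T -> 'I_T -> R) (u : 'I_T -> R) t (d : R) :
  (forall s, s \in Wn t -> 0 <= w t s) -> \sum_(s in Wn t) w t s = 1 ->
  (forall s, s \in Wn t -> d <= u s) -> d <= MA Wn w u t.
Proof.
move=> w_ge0 w_sum1 d_le_u; rewrite -[d]mul1r -w_sum1 mulr_suml.
by apply: ler_sum => s s_in; rewrite ler_wpM2l ?w_ge0 ?d_le_u.
Qed.

End lower_bounds.

Section xlnx_inequality.
Variable R : realType.

Lemma is_derive_ge0_le (f df : R -> R) (a b : R) : a <= b ->
  (forall x, x \in `[a, b]%R -> is_derive x 1 f (df x)) ->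
  (forall x, x \in `[a, b]%R -> 0 <= df x) -> f a <= f b.
Proof.
move=> ab fD df_ge0.
have fD' x : x \in `]a, b[%R -> is_derive x 1 f (df x).
  by move=> /subset_itv_oo_cc; exact: fD.
have [c cab fab] := MVT_segment ab fD'
  (derivable_within_continuous (fun x xab => @ex_derive _ _ _ _ _ _ _ (fD x xab))).
by rewrite -subr_ge0 fab mulr_ge0 ?df_ge0 ?subr_ge0.
Qed.

Lemma is_derive_lnD1 (x : R) : -1 < x ->
  is_derive x 1 (fun y => ln (y + 1)) (x + 1)^-1.
Proof.
move=> x_gtN1; rewrite -[_^-1]mulr1.
apply: is_derive1_comp; last exact: is_derive_shift.
by apply: is_derive1_ln; rewrite -ltrBlDr sub0r.
Qed.

Lemma is_derive_lnND1 (x : R) : x < 1 ->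
  is_derive x 1 (fun y => ln (- y + 1)) (- (- x + 1)^-1).
Proof.
move=> x_lt1; rewrite -mulrN1.
apply: (is_derive1_comp (f := fun y => ln (y + 1)) (g := -%R)).
by apply: is_derive_lnD1; rewrite ltrN2.
Qed.

Lemma is_derive_xlnxD1 (x : R) : -1 < x ->
  is_derive x 1 (fun y => (y + 1) * ln (y + 1)) (ln (x + 1) + 1).
Proof.
move=> x_gtN1; have x1_gt0 : 0 < x + 1 by rewrite -ltrBlDr sub0r.
have := is_deriveM (is_derive_shift x 1 1) (is_derive_lnD1 x_gtN1).
by rewrite /GRing.scale /= mulr1 mulfV ?gt_eqF // addrC.
Qed.

Lemma ln_ratio_ge (a : R) : 0 <= a < 1 -> 2 * a <= ln (a + 1) - ln (- a + 1).
Proof.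
case/andP=> a_ge0 a_lt1.
pose f y : R := ln (y + 1) - ln (- y + 1) - 2 * y.
suff : f 0 <= f a by rewrite /f oppr0 add0r ln1 mulr0 !subr0 subr_ge0.
have x_range x : x \in `[0, a]%R -> -1 < x /\ x < 1.
  rewrite in_itv /= => /andP[x_ge0 x_le_a].
  by split; [exact: lt_le_trans (ltrN10 R) x_ge0 | exact: le_lt_trans x_le_a a_lt1].
apply: (is_derive_ge0_le (df := fun x => (x + 1)^-1 + (- x + 1)^-1 - 2) a_ge0)
  => x /x_range[x_gtN1 x_lt1].
  have := is_deriveB (is_deriveB (is_derive_lnD1 x_gtN1) (is_derive_lnND1 x_lt1))
    (is_deriveZ 2 (is_derive_id x 1)).
  by rewrite opprK /GRing.scale /= mulr1.
have x1_gt0 : 0 < x + 1 by rewrite -ltrBlDr sub0r.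
have Nx1_gt0 : 0 < - x + 1 by rewrite addrC subr_gt0.
have -> : (x + 1)^-1 + (- x + 1)^-1 - 2 = 2 * x ^+ 2 / ((x + 1) * (- x + 1)).
  by field; rewrite !gt_eqF.
by apply: divr_ge0; rewrite mulr_ge0 ?sqr_ge0 ?ltW.
Qed.

Lemma sqr_le_xlnx_pair_lt1 (a : R) : 0 <= a < 1 ->
  a ^+ 2 <= (a + 1) * ln (a + 1) + (- a + 1) * ln (- a + 1).
Proof.
case/andP=> a_ge0 a_lt1.
pose f y : R := (y + 1) * ln (y + 1) + (- y + 1) * ln (- y + 1) - y ^+ 2.
suff : f 0 <= f a by rewrite /f oppr0 add0r ln1 !mulr0 expr0n /= !subr0 add0r subr_ge0.
apply: (is_derive_ge0_le (df := fun x => ln (x + 1) - ln (- x + 1) - 2 * x) a_ge0)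
  => x; rewrite in_itv /= => /andP[x_ge0 x_le_a]; last first.
  by rewrite subr_ge0 ln_ratio_ge // x_ge0 (le_lt_trans x_le_a).
have x_gtN1 : -1 < x by exact: lt_le_trans (ltrN10 R) x_ge0.
have Nx_gtN1 : -1 < - x by rewrite ltrN2 (le_lt_trans x_le_a).
have NxlnxD1 := is_derive1_comp (g := -%R) (is_derive_xlnxD1 Nx_gtN1)
  (is_deriveNid x 1).
have := is_deriveB (is_deriveD (is_derive_xlnxD1 x_gtN1) NxlnxD1)
  (is_deriveX 2 (is_derive_id x 1)).
by move/is_derive_eq; apply; rewrite /GRing.scale /=; ring.
Qed.

Lemma one_le_2ln2 : 1 <= 2 * ln (2 : R).
Proof.
have := @le_ln1Dx R (- 2^-1); rewrite ltrN2 invf_lt1 ?ltr1n // => /(_ isT).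
have -> : 1 - 2^-1 = 2^-1 :> R by rewrite {1}(splitr 1) mul1r addrK.
by rewrite lnV ?posrE // lerN2 -ler_pdivrMl // mulr1.
Qed.

Lemma sqr_le_xlnx_pair (a : R) : -1 <= a <= 1 ->
  a ^+ 2 <= (1 + a) * ln (1 + a) + (1 - a) * ln (1 - a).
Proof.
wlog a_ge0 : a / 0 <= a => [sym /andP[a_geN1 a_le1]|].
  have [a_ge0|a_lt0] := leP 0 a; first by apply: sym => //; rewrite a_geN1.
  have := sym (- a); rewrite opprK sqrrN addrC; apply; first by rewrite oppr_ge0 ltW.
  by apply/andP; split; lra.
case/andP=> _ a_le1; rewrite [1 + a]addrC [1 - a]addrC.
have [->|a_neq1] := eqVneq a 1; last first.
  by apply: sqr_le_xlnx_pair_lt1; rewrite a_ge0 lt_neqAle a_neq1.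
by rewrite addNr mul0r addr0 expr1n; exact: one_le_2ln2.
Qed.

Lemma mulr_sub_sqr_le (mu b : R) : mu * b - mu ^+ 2 / 2 <= b ^+ 2 / 2.
Proof. have := sqr_ge0 (b - mu); nra. Qed.

Lemma JS_term_ge (mu p q : R) : 0 <= p -> 0 <= q ->
  mu * `|p - q| / 2 - mu ^+ 2 * (p + q) / 4 <=
  p * ln (p / ((p + q) / 2)) / 2 + q * ln (q / ((p + q) / 2)) / 2.
Proof.
move=> p_ge0 q_ge0; have [pq0|pq_neq0] := eqVneq (p + q) 0.
  have [-> ->] : p = 0 /\ q = 0 by split; lra.
  by rewrite subrr normr0 !(mulr0, mul0r, addr0); lra.
have pq_gt0 : 0 < p + q by rewrite lt_neqAle eq_sym pq_neq0 addr_ge0.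
set m := (p + q) / 2; set a := (p - q) / (p + q).
have m_ge0 : 0 <= m by rewrite divr_ge0 // ltW.
have -> : p / m = 1 + a by rewrite /m /a; field; rewrite pq_neq0.
have -> : q / m = 1 - a by rewrite /m /a; field; rewrite pq_neq0.
have a_range : -1 <= a <= 1.
  by rewrite -ler_norml normf_div (gtr0_norm pq_gt0) ler_pdivrMr // mul1r ler_norml; lra.
have -> : `|p - q| = 2 * m * `|a|.
  by rewrite /a normf_div (gtr0_norm pq_gt0) /m; field; rewrite pq_neq0.
have -> : p = m * (1 + a) by rewrite /m /a; field; rewrite pq_neq0.
have -> : q = m * (1 - a) by rewrite /m /a; field; rewrite pq_neq0.
have := ler_wpM2l m_ge0 (sqr_le_xlnx_pair a_range).
have := ler_wpM2l m_ge0 (mulr_sub_sqr_le mu `|a|).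
rewrite real_normK ?num_real //; nra.
Qed.

Lemma KLE (S : finType) (p q : S -> R) : KL p q = \sum_x p x * ln (p x / q x).
Proof. by apply: eq_bigr => x _; case: eqP => // ->; rewrite mul0r. Qed.

Lemma JS_ge_l1dist_affine (S : finType) (p q : S -> R) (mu : R) :
  is_prob p -> is_prob q -> mu * l1dist p q / 2 - mu ^+ 2 / 2 <= JS p q.
Proof.
move=> [p_ge0 p_sum1] [q_ge0 q_sum1].
have -> : mu ^+ 2 / 2 = \sum_x mu ^+ 2 * (p x + q x) / 4.
  by rewrite -mulr_suml -mulr_sumr big_split /= p_sum1 q_sum1; field.
rewrite /JS !KLE /l1dist mulr_sumr !mulr_suml -sumrB -big_split /=.
by apply: ler_sum => x _; exact: JS_term_ge.
Qed.

Lemma JS_ge_l1dist (S : finType) (p q : S -> R) :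
  is_prob p -> is_prob q -> l1dist p q ^+ 2 / 8 <= JS p q.
Proof.
move=> p_prob q_prob; set d := l1dist p q.
have -> : d ^+ 2 / 8 = d / 2 * d / 2 - (d / 2) ^+ 2 / 2 by field.
exact: JS_ge_l1dist_affine.
Qed.

End xlnx_inequality.

(* Coarse scales k = 2..K are indexed by k' : 'I_K.-1 (k = k' + 2). *)
Theorem lemma3 (R : realType) (T C K N : nat)
  (hT : (1 <= T)%N) (hC : (1 <= C)%N) (hK : (1 <= K)%N)
  (Tk : 'I_K.-1 -> nat) (hTk : forall k, (1 <= Tk k)%N)
  (* (a) frame-bounded linear map *)
  (W : {linear 'M[R]_(T, C) -> 'rV[R]_N}) (A B : R)
  (hA : 0 < A) (hAB : A <= B)
  (hframe : forall Y : 'M[R]_(T, C),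
     Num.sqrt A * frob Y <= frob (W Y) /\ frob (W Y) <= Num.sqrt B * frob Y)
  (* (b) upsampling operators *)
  (Up : forall k : 'I_K.-1, {linear 'rV[R]_(Tk k) -> 'rV[R]_T})
  (* (c) moving-average smoother *)
  (Wn : 'I_T -> {set 'I_T}) (w : 'I_T -> 'I_T -> R)
  (hw0 : forall t s, s \in Wn t -> 0 <= w t s)
  (hw1 : forall t, \sum_(s in Wn t) w t s = 1)
  (rho : R) (hrho : 1 <= rho)
  (hrhoMA : forall u : 'I_T -> R, (forall t, 0 <= u t) ->
     tmean (MA Wn w u) <= rho * tmean u)
  (* (d) weights *)
  (af at_ ag ac acyc ams : R)
  (haf : 0 <= af) (hat : 0 <= at_) (hag : 0 <= ag) (hac : 0 <= ac)
  (hacyc : 0 <= acyc) (hams : 0 <= ams)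
  (om : 'I_K.-1 -> R) (omfull : R)
  (hom : forall k, 0 < om k) (homfull : 0 < omfull)
  (homsum : \sum_k om k + omfull = 1) :
  let c := fun (Xms Xf : 'M[R]_(T, C)) (t : 'I_T) => rowabs (Xms - Xf) t in
  let Acyc_tilde := fun (X Xh Xf Xms : 'M[R]_(T, C)) (g : 'I_T -> R) (t : 'I_T) =>
      af * rowabs (Xf - X) t + at_ * rowabs (Xh - X) t + ag * `|g t|
      + ac * c Xms Xf t in
  let Acyc := fun X Xh Xf Xms g => MA Wn w (Acyc_tilde X Xh Xf Xms g) in
  (* (1) *)
  (exists kms kcyc kcons kg k0 : R,
    [/\ 0 <= kms, 0 <= kcyc, 0 <= kcons, 0 <= kg & 0 <= k0] /\
    forall (X Xh Xf Xms : 'M[R]_(T, C))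
           (Xk Xkms : forall k : 'I_K.-1, 'M[R]_(Tk k, C))
           (g : 'I_T -> R) (ems ecyc econs : R),
      let Lms := \sum_k om k * loss (Xkms k) (Xk k) + omfull * loss Xms X in
      let Lcyc := loss (W Xh) (W X) + loss Xf X in
      let Lcons := loss Xms Xf in
      let Ams := fun t : 'I_T => rowabs (Xms - X) t
          + \sum_k (Up k (rowabs_vec (Xkms k - Xk k))) ord0 t in
      let Aall := fun t => acyc * Acyc X Xh Xf Xms g t + ams * Ams t in
      Lms <= ems -> Lcyc <= ecyc -> Lcons <= econs ->
      tmean Aall <= kms * ems + rho * kcyc * ecyc + rho * kcons * econs
                    + rho * kg * ag * tmean (fun t => `|g t|) + k0)
  /\
  (* (2) *)
  (forall (X Xh Xf Xms : 'M[R]_(T, C)) (g : 'I_T -> R)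
          (Om : {set 'I_T}) (dt df dc : R),
     Om != set0 ->
     tmean_on Om (rowabs (Xh - X)) >= dt ->
     tmean_on Om (rowabs (Xf - X)) >= df ->
     tmean_on Om (c Xms Xf) >= dc ->
     tmean_on Om (Acyc_tilde X Xh Xf Xms g) >= at_ * dt + af * df + ac * dc)
  /\
  (* (3) *)
  (forall (X Xh Xf Xms : 'M[R]_(T, C)) (g : 'I_T -> R)
          (Om : {set 'I_T}) (dt df dc : R),
     Om != set0 ->
     (forall t, t \in Om -> rowabs (Xh - X) t >= dt) ->
     (forall t, t \in Om -> rowabs (Xf - X) t >= df) ->
     (forall t, t \in Om -> c Xms Xf t >= dc) ->
     forall t, t \in Om -> Wn t \subset Om ->
       Acyc X Xh Xf Xms g t >= at_ * dt + af * df + ac * dc)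
  /\
  (* (4) *)
  (forall (S : finType) (Om : {set 'I_T}) (p pf : 'I_T -> S -> R) (dp : R),
     Om != set0 -> 0 <= dp ->
     (forall t, t \in Om -> is_prob (p t) /\ is_prob (pf t)) ->
     (forall t, t \in Om -> l1dist (p t) (pf t) >= dp) ->
     tmean_on Om (fun t => JS (p t) (pf t)) >= dp ^+ 2 / 8).
Proof.
move=> c Acyc_tilde Acyc; split; [|split; [|split]].
- exact: (tmean_score_le hT hA (fun Y => (hframe Y).1) Up (le_trans ler01 hrho) hrhoMA
    haf hat hag hac hacyc hams hom homfull).
- move=> X Xh Xf Xms g Om dt df dc _ mean_h mean_f mean_c.
  rewrite /Acyc_tilde !tmean_onD !tmean_onZ.
  by apply: weighted_score_ge => //; apply: tmean_on_ge0.
- move=> X Xh Xf Xms g Om dt df dc _ res_h res_f res_c t _ /subsetP Wn_sub.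
  apply: MA_ge => [s|//|s /Wn_sub s_in]; first exact: hw0.
  by apply: weighted_score_ge => //; [exact: res_f | exact: res_h | exact: res_c].
- move=> S Om p pf dp Om_neq0 dp_ge0 prob l1_ge; apply: tmean_on_ge => // t t_in.
  have [p_prob pf_prob] := prob t t_in.
  apply: le_trans (JS_ge_l1dist p_prob pf_prob).
  by rewrite ler_wpM2r ?invr_ge0 // ler_sqr ?nnegrE ?l1_ge // (le_trans dp_ge0 (l1_ge t t_in)).
Qed.
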